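(* Let $H_0,H_1$ be complex Hilbert spaces, $G$ a densely defined closed operator from $H_0$ into $H_1$ and $D$ a densely defined closed operator from $H_1$ into $H_0$ with $-G^*\subset D$. Let $m\in\mathcal L(H_0)$ (not necessarily coercive) and let $a\in\mathcal L(H_1)$ be coercive. Let $T\in\mathcal L(\mathrm{dom}(G))$ be defined by $(Tu,v)_{\mathrm{dom}(G)}=(aGu,Gv)_{H_1}+(mu,v)_{H_0}$ for all $u,v\in\mathrm{dom}(G)$, and assume $\mathrm{ran}(T)$ is closed in $\mathrm{dom}(G)$. Then the Dirichlet-to-Neumann graph $\Lambda$ associated with $-DaG+m$ satisfies \[ \mathrm{dom}(\Lambda^{-1})=\{q_0\in\mathrm{BD}(D):(Dq_0,\pi_{\mathrm{BD}(G)}v)_{\mathrm{BD}(G)}=0\text{ for all }v\in\ker(m^*-\mathring Da^*G)\}. \]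
   Context: $\mathring D=-G^*$, $\mathring G=-D^*$. Domains carry graph inner products, e.g. $(u,v)_{\mathrm{dom}(G)}=(u,v)_{H_0}+(Gu,Gv)_{H_1}$. $\mathrm{BD}(G)$ (resp. $\mathrm{BD}(D)$) is the orthogonal complement of $\mathrm{dom}(\mathring G)$ in $\mathrm{dom}(G)$ (resp. of $\mathrm{dom}(\mathring D)$ in $\mathrm{dom}(D)$) with induced inner products; $\pi_{\mathrm{BD}(G)},\pi_{\mathrm{BD}(D)}$ the orthogonal projections. $D$ maps $\mathrm{BD}(D)$ into $\mathrm{BD}(G)$. Coercive: $\mathrm{Re}(ax,x)\ge\mu\|x\|^2$ for some $\mu>0$. The Dirichlet-to-Neumann graph is $\Lambda=\{(\pi_{\mathrm{BD}(G)}u,\pi_{\mathrm{BD}(D)}aGu): u\in\mathrm{dom}(G),\ aGu\in\mathrm{dom}(D),\ mu-DaGu=0\}$; its inverse graph is $\Lambda^{-1}=\{(q,p):(p,q)\in\Lambda\}$ and $\mathrm{dom}(\Lambda^{-1})$ the set of its first components. $\ker(m^*-\mathring Da^*G)=\{v\in\mathrm{dom}(G):a^*Gv\in\mathrm{dom}(\mathring D),\ m^*v=\mathring Da^*Gv\}$. *)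

From HB Require Import structures.
From mathcomp Require Import all_boot all_order all_algebra.
From mathcomp Require Import classical_sets reals.
From mathcomp Require Import complex.
Set Implicit Arguments. Unset Strict Implicit. Unset Printing Implicit Defensive.
Import Order.TTheory GRing.Theory Num.Theory.
Local Open Scope ring_scope.
Local Open Scope classical_set_scope.

(* Scalars: the complex numbers R[i] over a real field R : realType.
   Inner products are linear in the first and conjugate-linear in the second
   argument. *)

Definition is_inner_product (R : realType) (V : lmodType R[i])
    (ip : V -> V -> R[i]) : Prop :=
  [/\ (forall (a : R[i]) (x y z : V), ip (a *: x + y) z = a * ip x z + ip y z),
      (forall x y : V, ip y x = conjc (ip x y)) &
      (forall x : V, x != 0 -> 0 < complex.Re (ip x x))].

Definition ipnorm (R : realType) (V : lmodType R[i]) (ip : V -> V -> R[i])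
    (x : V) : R := Num.sqrt (complex.Re (ip x x)).

Definition cvg_to (R : realType) (V : lmodType R[i]) (ip : V -> V -> R[i])
    (u : nat -> V) (x : V) : Prop :=
  forall eps : R, 0 < eps -> exists N : nat,
    forall n : nat, (N <= n)%N -> ipnorm ip (u n - x) < eps.

Definition cauchy_seq (R : realType) (V : lmodType R[i]) (ip : V -> V -> R[i])
    (u : nat -> V) : Prop :=
  forall eps : R, 0 < eps -> exists N : nat,
    forall n m : nat, (N <= n)%N -> (N <= m)%N -> ipnorm ip (u n - u m) < eps.

Definition is_hilbert (R : realType) (V : lmodType R[i]) (ip : V -> V -> R[i])
    : Prop :=
  is_inner_product ip /\
  (forall u : nat -> V, cauchy_seq ip u -> exists x : V, cvg_to ip u x).

(* An (unbounded) operator A from V to W with domain dom : set V;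
   the values of A outside dom are irrelevant. *)
Definition linear_op (R : realType) (V W : lmodType R[i])
    (dom : set V) (A : V -> W) : Prop :=
  dom 0 /\
  (forall (a : R[i]) (x y : V), dom x -> dom y ->
     dom (a *: x + y) /\ A (a *: x + y) = a *: A x + A y).

Definition densely_defined (R : realType) (V : lmodType R[i])
    (ipV : V -> V -> R[i]) (dom : set V) : Prop :=
  forall (x : V) (eps : R), 0 < eps -> exists y : V, dom y /\ ipnorm ipV (x - y) < eps.

Definition closed_op (R : realType) (V W : lmodType R[i])
    (ipV : V -> V -> R[i]) (ipW : W -> W -> R[i]) (dom : set V) (A : V -> W)
    : Prop :=
  forall (u : nat -> V) (x : V) (y : W),
    (forall n, dom (u n)) -> cvg_to ipV u x -> cvg_to ipW (fun n => A (u n)) y ->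
    dom x /\ A x = y.

Definition adjoint_graph (R : realType) (V W : lmodType R[i])
    (ipV : V -> V -> R[i]) (ipW : W -> W -> R[i]) (dom : set V) (A : V -> W)
    : set (W * V) :=
  [set p | forall x : V, dom x -> ipW (A x) p.1 = ipV x p.2].

Definition adjoint_dom (R : realType) (V W : lmodType R[i])
    (ipV : V -> V -> R[i]) (ipW : W -> W -> R[i]) (dom : set V) (A : V -> W)
    : set W :=
  [set y | exists z : V, adjoint_graph ipV ipW dom A (y, z)].

Definition bounded_op (R : realType) (V : lmodType R[i]) (ip : V -> V -> R[i])
    (A : V -> V) : Prop :=
  (forall (a : R[i]) (x y : V), A (a *: x + y) = a *: A x + A y) /\
  (exists c : R, forall x : V, ipnorm ip (A x) <= c * ipnorm ip x).

Definition coercive (R : realType) (V : lmodType R[i]) (ip : V -> V -> R[i])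
    (A : V -> V) : Prop :=
  exists mu : R, 0 < mu /\
    forall x : V, mu * ipnorm ip x ^+ 2 <= complex.Re (ip (A x) x).

Definition graph_ip (R : realType) (V W : lmodType R[i])
    (ipV : V -> V -> R[i]) (ipW : W -> W -> R[i]) (A : V -> W) (u v : V) : R[i] :=
  ipV u v + ipW (A u) (A v).

(* BD(A) : orthogonal complement of dom0 (= dom of the "ring" operator)
   in dom(A), for the graph inner product *)
Definition BD (R : realType) (V W : lmodType R[i])
    (ipV : V -> V -> R[i]) (ipW : W -> W -> R[i]) (dom : set V) (A : V -> W)
    (dom0 : set V) : set V :=
  [set u | dom u /\ forall w : V, dom0 w -> graph_ip ipV ipW A u w = 0].

Definition is_orth_proj (R : realType) (V : lmodType R[i]) (ip : V -> V -> R[i])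
    (S : set V) (u p : V) : Prop :=
  S p /\ forall s : V, S s -> ip (u - p) s = 0.

(* The Dirichlet-to-Neumann graph associated with -DaG+m.
   dom(ring G) = dom(-D^* ) = adjoint_dom D,  dom(ring D) = dom(-G^* ) = adjoint_dom G. *)
Definition BDG (R : realType) (H0 H1 : lmodType R[i])
    (ip0 : H0 -> H0 -> R[i]) (ip1 : H1 -> H1 -> R[i])
    (domG : set H0) (G : H0 -> H1) (domD : set H1) (D : H1 -> H0) : set H0 :=
  BD ip0 ip1 domG G (adjoint_dom ip1 ip0 domD D).

Definition BDD (R : realType) (H0 H1 : lmodType R[i])
    (ip0 : H0 -> H0 -> R[i]) (ip1 : H1 -> H1 -> R[i])
    (domG : set H0) (G : H0 -> H1) (domD : set H1) (D : H1 -> H0) : set H1 :=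
  BD ip1 ip0 domD D (adjoint_dom ip0 ip1 domG G).

Definition DtN_graph (R : realType) (H0 H1 : lmodType R[i])
    (ip0 : H0 -> H0 -> R[i]) (ip1 : H1 -> H1 -> R[i])
    (domG : set H0) (G : H0 -> H1) (domD : set H1) (D : H1 -> H0)
    (a : H1 -> H1) (m : H0 -> H0) : set (H0 * H1) :=
  [set pq | exists u : H0,
     [/\ domG u, domD (a (G u)), m u - D (a (G u)) = 0,
         is_orth_proj (graph_ip ip0 ip1 G) (BDG ip0 ip1 domG G domD D) u pq.1 &
         is_orth_proj (graph_ip ip1 ip0 D) (BDD ip0 ip1 domG G domD D) (a (G u)) pq.2]].

Definition dom_inv (A B : Type) (L : set (A * B)) : set B :=
  [set q | exists p : A, L (p, q)].

(* ker(m^* - ring(D) a^* G), with ring(D) = -G^*, where mst = m^*, ast = a^* *)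
Definition ker_mstar (R : realType) (H0 H1 : lmodType R[i])
    (ip0 : H0 -> H0 -> R[i]) (ip1 : H1 -> H1 -> R[i])
    (domG : set H0) (G : H0 -> H1) (ast : H1 -> H1) (mst : H0 -> H0) : set H0 :=
  [set v | domG v /\ exists z : H0,
     adjoint_graph ip0 ip1 domG G (ast (G v), z) /\ mst v = - z].

(* For u in dom(G) and q in BD(D), T u = D q holds exactly when a G u - q lies in
   dom(ring D) with ring D (a G u - q) = m u - D q, i.e. when m u = D a G u and q is
   the projection of a G u onto BD(D).  So dom(Lambda^-1) is the set of q in BD(D)
   with D q in ran(T).  Now ker(m^* - ring D a^* G) is exactly the orthogonal
   complement of ran(T) in dom(G); as ran(T) is closed, D q lies in ran(T) iff it is
   orthogonal to that kernel, and since D q lies in BD(G) this orthogonality only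
   sees the projections onto BD(G).  Everything rests on the projection theorem,
   used in dom(G), dom(D) and H0 x H1 with their graph inner products. *)

From HB Require Import structures.
From mathcomp Require Import all_boot all_order all_algebra.
From mathcomp Require Import classical_sets reals.
From mathcomp Require Import complex.
From mathcomp Require Import ring lra.
Import Order.TTheory GRing.Theory Num.Theory.
Local Open Scope ring_scope.
Local Open Scope classical_set_scope.
Set Implicit Arguments. Unset Strict Implicit. Unset Printing Implicit Defensive.

Local Notation Re := complex.Re.
Local Notation Im := complex.Im.

Section ComplexParts.
Variable R : realType.
Implicit Types (r : R) (x y : R[i]).

Lemma Re_add x y : Re (x + y) = Re x + Re y. Proof. by case: x; case: y. Qed.
Lemma Re_opp x : Re (- x) = - Re x. Proof. by case: x. Qed.
Lemma Re_conj x : Re x^*%C = Re x. Proof. by case: x. Qed.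
Lemma Re_realM r x : Re (r%:C%C * x) = r * Re x.
Proof. by case: x => a b /=; rewrite mul0r subr0. Qed.
Lemma Re_conjiM x : Re ('i^*%C * x) = Im x.
Proof. by case: x => a b /=; lra. Qed.
Lemma complex_eq0 x : Re x = 0 -> Im x = 0 -> x = 0.
Proof. by case: x => a b /= -> ->. Qed.

End ComplexParts.

Section RealFacts.
Variable R : realType.

Lemma sqr_le_of_quadratic_ge0 (A B C : R) : 0 <= A -> 0 <= C ->
  (forall t, 0 <= t ^+ 2 * A + 2 * t * B + C) -> B ^+ 2 <= A * C.
Proof.
move=> A0 C0 h; have [Agt0|] := ltrP 0 A.
  have := h (- B / A); set t := - B / A => ht.
  have tA : t * A = - B by rewrite /t mulfVK // gt_eqF.
  nra.
move=> Ale0; have -> : A = 0 by apply/le_anti; rewrite Ale0 A0.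
rewrite mul0r.
have [->|B0] := eqVneq B 0; first by rewrite expr0n.
have := h (- (C + 1) / (2 * B)); set t := - (C + 1) / (2 * B) => ht.
have tB : t * (2 * B) = - (C + 1) by rewrite /t mulfVK // mulf_neq0 ?pnatr_eq0.
nra.
Qed.

Lemma eq0_of_small (r K : R) : 0 <= K -> (forall e, 0 < e -> `|r| <= e * K) -> r = 0.
Proof.
move=> K0 h; apply/normr0_eq0/le_anti; rewrite normr_ge0 andbT.
apply/ler_addgt0Pr => e e0; rewrite add0r.
apply: (le_trans (h (e / (K + 1)) _)); first by rewrite divr_gt0 // ltr_wpDl.
rewrite mulrAC ler_pdivrMr ?ltr_wpDl //; nra.
Qed.

Lemma invS_le (N n : nat) : (N <= n)%N -> n.+1%:R^-1 <= N.+1%:R^-1 :> R.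
Proof. by move=> Nn; rewrite lef_pV2 ?posrE ?ltr0Sn // ler_nat. Qed.

End RealFacts.

(** * Inner products on a subspace *)

Definition subspace (R : realType) (V : lmodType R[i]) (X : set V) : Prop :=
  X 0 /\ forall (a : R[i]) (x y : V), X x -> X y -> X (a *: x + y).

(* Sesquilinearity and positivity are only required on [X], so that the graph inner
   product of an unbounded operator, meaningful on its domain only, fits. *)
Definition semi_inner_on (R : realType) (V : lmodType R[i])
    (ip : V -> V -> R[i]) (X : set V) : Prop :=
  [/\ subspace X,
       forall a x y z, X x -> X y -> X z -> ip (a *: x + y) z = a * ip x z + ip y z,
       forall x y, X x -> X y -> ip y x = (ip x y)^*%C &
       forall x, X x -> 0 <= Re (ip x x)].

Definition definite_on (R : realType) (V : lmodType R[i])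
    (ip : V -> V -> R[i]) (X : set V) : Prop :=
  forall x, X x -> Re (ip x x) = 0 -> x = 0.

Definition complete_on (R : realType) (V : lmodType R[i])
    (ip : V -> V -> R[i]) (X : set V) : Prop :=
  forall u, (forall n, X (u n)) -> cauchy_seq ip u -> exists2 x, X x & cvg_to ip u x.

Definition closed_in (R : realType) (V : lmodType R[i])
    (ip : V -> V -> R[i]) (X M : set V) : Prop :=
  forall u x, (forall n, M (u n)) -> X x -> cvg_to ip u x -> M x.

Definition sqnorm (R : realType) (V : lmodType R[i]) (ip : V -> V -> R[i]) (x : V) : R :=
  Re (ip x x).

Lemma ipnorm_ge0 (R : realType) (V : lmodType R[i]) (ip : V -> V -> R[i]) (x : V) :
  0 <= ipnorm ip x.
Proof. exact: sqrtr_ge0. Qed.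

Section Subspace.
Variables (R : realType) (V : lmodType R[i]) (X : set V).
Hypothesis hX : subspace X.

Lemma subspace0 : X 0. Proof. by case: hX. Qed.
Lemma subspaceL a x y : X x -> X y -> X (a *: x + y). Proof. by case: hX => _; apply. Qed.
Lemma subspaceZ a x : X x -> X (a *: x).
Proof. by move=> Xx; rewrite -[_ *: _]addr0; apply: subspaceL => //; apply: subspace0. Qed.
Lemma subspaceD x y : X x -> X y -> X (x + y).
Proof. by rewrite -{2}[x]scale1r; apply: subspaceL. Qed.
Lemma subspaceN x : X x -> X (- x).
Proof. by rewrite -scaleN1r; apply: subspaceZ. Qed.
Lemma subspaceB x y : X x -> X y -> X (x - y).
Proof. by move=> Xx Xy; apply: subspaceD => //; apply: subspaceN. Qed.

End Subspace.

Lemma linear_op_subspace (R : realType) (V W : lmodType R[i]) (dom : set V) (A : V -> W) :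
  linear_op dom A -> subspace dom.
Proof. by case=> dom0 domL; split=> // a x y Xx Xy; case: (domL a x y Xx Xy). Qed.

Lemma semi_inner_subspace (R : realType) (V : lmodType R[i]) (ip : V -> V -> R[i]) (X : set V) :
  semi_inner_on ip X -> subspace X.
Proof. by case. Qed.

(* Lets [//] discharge the membership side conditions [X (a *: x + y)], [X (x - y)],
   ... generated by the lemmas below. *)
Ltac subspace_mem :=
  lazymatch goal with |- ?X ?t =>
    first [ assumption
          | match goal with h : forall _, X _ |- _ => exact: h end
          | match goal with h : _ `<=` X |- _ => apply: h; subspace_mem end
          | match goal with h : forall _, _ -> X _ |- _ => apply: h; subspace_mem end
          | is_var X;
            let hX := match goal with
                      | h : subspace X |- _ => constr:(h)
                      | h : linear_op X _ |- _ => constr:(linear_op_subspace h)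
                      | h : semi_inner_on _ X |- _ => constr:(semi_inner_subspace h)
                      end in
            lazymatch t with
            | 0 => exact: (subspace0 hX)
            | _ *: _ + _ => apply: (subspaceL hX); subspace_mem
            | _ - _ => apply: (subspaceB hX); subspace_mem
            | _ + _ => apply: (subspaceD hX); subspace_mem
            | - _ => apply: (subspaceN hX); subspace_mem
            | _ *: _ => apply: (subspaceZ hX); subspace_mem
            end ]
  end.
#[local] Hint Extern 0 => subspace_mem : core.

Section SemiInnerProduct.
Variables (R : realType) (V : lmodType R[i]) (ip : V -> V -> R[i]) (X : set V).
Hypothesis hX : semi_inner_on ip X.

Lemma ip_conj x y : X x -> X y -> ip y x = (ip x y)^*%C.
Proof. by case: hX => _ _ + _; apply. Qed.
Lemma sqnorm_ge0 x : X x -> 0 <= sqnorm ip x.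
Proof. by case: hX => _ _ _; apply. Qed.
Lemma ipDl x y z : X x -> X y -> X z -> ip (x + y) z = ip x z + ip y z.
Proof. by case: hX => _ ipL _ _ Xx Xy Xz; rewrite -{1}[x]scale1r ipL // mul1r. Qed.
Lemma ip0l z : X z -> ip 0 z = 0.
Proof.
case: hX => _ ipL _ _ Xz; have := ipL 1 0 0 z.
rewrite scale1r addr0 mul1r => /(_ _ _ Xz) h.
by apply: (addrI (ip 0 z)); rewrite addr0 -h.
Qed.
Lemma ip0r z : X z -> ip z 0 = 0.
Proof. by move=> Xz; rewrite ip_conj // ip0l // conjc0. Qed.
Lemma ipZl a x z : X x -> X z -> ip (a *: x) z = a * ip x z.
Proof. by case: hX => _ ipL _ _ Xx Xz; rewrite -[_ *: x]addr0 ipL // ip0l // addr0. Qed.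
Lemma ipNl x z : X x -> X z -> ip (- x) z = - ip x z.
Proof. by move=> Xx Xz; rewrite -scaleN1r ipZl // mulN1r. Qed.
Lemma ipBl x y z : X x -> X y -> X z -> ip (x - y) z = ip x z - ip y z.
Proof. by move=> Xx Xy Xz; rewrite ipDl ?ipNl. Qed.
Lemma ipDr x y z : X x -> X y -> X z -> ip z (x + y) = ip z x + ip z y.
Proof. by move=> Xx Xy Xz; rewrite !(ip_conj _ Xz) // ipDl // rmorphD. Qed.
Lemma ipZr a x z : X x -> X z -> ip z (a *: x) = a^*%C * ip z x.
Proof. by move=> Xx Xz; rewrite !(ip_conj _ Xz) // ipZl // rmorphM. Qed.
Lemma ipNr x z : X x -> X z -> ip z (- x) = - ip z x.
Proof. by move=> Xx Xz; rewrite !(ip_conj _ Xz) // ipNl // rmorphN. Qed.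
Lemma ipBr x y z : X x -> X y -> X z -> ip z (x - y) = ip z x - ip z y.
Proof. by move=> Xx Xy Xz; rewrite ipDr ?ipNr. Qed.

Lemma ip_eq_on (dX : definite_on ip X) x y : X x -> X y ->
  (forall v, X v -> ip x v = ip y v) -> x = y.
Proof.
move=> Xx Xy eq_xy; apply/eqP; rewrite -subr_eq0; apply/eqP.
by apply: dX => //; rewrite ipBl // eq_xy // subrr.
Qed.

Lemma ip_eq0_sym x y : X x -> X y -> ip x y = 0 -> ip y x = 0.
Proof. by move=> Xx Xy h; rewrite ip_conj // h conjc0. Qed.

Lemma sqnormD x y : X x -> X y ->
  sqnorm ip (x + y) = sqnorm ip x + 2 * Re (ip x y) + sqnorm ip y.
Proof.
move=> Xx Xy; rewrite /sqnorm ipDl // !ipDr // (ip_conj Xx Xy).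
rewrite !Re_add Re_conj; lra.
Qed.

Lemma sqnorm_realZD (t : R) x y : X x -> X y ->
  sqnorm ip (t%:C%C *: x + y) = t ^+ 2 * sqnorm ip x + 2 * t * Re (ip x y) + sqnorm ip y.
Proof.
move=> Xx Xy; rewrite sqnormD // /sqnorm !ipZl // ipZr // conjc_real.
rewrite !Re_realM; ring.
Qed.

Lemma parallelogram x y : X x -> X y ->
  sqnorm ip (x + y) + sqnorm ip (x - y) = 2 * sqnorm ip x + 2 * sqnorm ip y.
Proof.
move=> Xx Xy.
rewrite !sqnormD // /sqnorm ipNl // !ipNr // opprK Re_opp; lra.
Qed.

Lemma ipnorm_sqr x : X x -> ipnorm ip x ^+ 2 = sqnorm ip x.
Proof. by move=> Xx; rewrite sqr_sqrtr // sqnorm_ge0. Qed.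

Lemma Re_ip_sqr_le x y : X x -> X y -> Re (ip x y) ^+ 2 <= sqnorm ip x * sqnorm ip y.
Proof.
move=> Xx Xy; apply: sqr_le_of_quadratic_ge0; rewrite ?sqnorm_ge0 // => t.
by rewrite -sqnorm_realZD // sqnorm_ge0.
Qed.

Lemma Re_ip_le x y : X x -> X y -> `|Re (ip x y)| <= ipnorm ip x * ipnorm ip y.
Proof.
move=> Xx Xy; rewrite -sqrtr_sqr /ipnorm -sqrtrM ?sqnorm_ge0 //.
by rewrite ler_sqrt ?Re_ip_sqr_le // mulr_ge0 ?sqnorm_ge0.
Qed.

Lemma ipnormD_le x y : X x -> X y -> ipnorm ip (x + y) <= ipnorm ip x + ipnorm ip y.
Proof.
move=> Xx Xy; have nx := sqrtr_ge0 (sqnorm ip x); have ny := sqrtr_ge0 (sqnorm ip y).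
rewrite -(ger0_norm (addr_ge0 nx ny)) -sqrtr_sqr ler_sqrt ?sqr_ge0 //.
rewrite -/(sqnorm ip _) sqnormD // sqrrD !ipnorm_sqr //.
have := Re_ip_le Xx Xy; have := ler_norm (Re (ip x y)); rewrite /ipnorm; lra.
Qed.

Lemma ip_eq0_Re x w : X x -> X w ->
  Re (ip x w) = 0 -> Re (ip x ('i%C *: w)) = 0 -> ip x w = 0.
Proof. by move=> Xx Xw Re0 Rei0; apply: complex_eq0; rewrite // -Re_conjiM -ipZr. Qed.

Lemma cvg_ip_eq0 u x w : (forall n, X (u n)) -> X x -> X w -> cvg_to ip u x ->
  (forall n, ip (u n) w = 0) -> ip x w = 0.
Proof.
move=> Xu Xx Xw ux uw0.
have Re_eq0 w' : X w' -> (forall n, ip (u n) w' = 0) -> Re (ip x w') = 0.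
  move=> Xw' uw'0; apply: (eq0_of_small (sqrtr_ge0 (sqnorm ip w'))) => e e0.
  have [N uNx] := ux e e0.
  have -> : Re (ip x w') = - Re (ip (u N - x) w') by rewrite ipBl // uw'0 sub0r Re_opp opprK.
  rewrite normrN; apply: le_trans (@Re_ip_le (u N - x) w' _ _) _ => //.
  by apply: ler_wpM2r; [exact: sqrtr_ge0 | exact/ltW/uNx].
apply: ip_eq0_Re => //; apply: Re_eq0 => // n.
by rewrite ipZr // uw0 mulr0.
Qed.

End SemiInnerProduct.

(** * Orthogonal projections *)

Definition orth_compl (R : realType) (V : lmodType R[i]) (ip : V -> V -> R[i])
    (X S : set V) : set V :=
  [set u | X u /\ forall w, S w -> ip u w = 0].

Section OrthCompl.
Variables (R : realType) (V : lmodType R[i]) (ip : V -> V -> R[i]) (X S : set V).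
Hypotheses (hX : semi_inner_on ip X) (SX : S `<=` X).

Lemma orth_compl_subspace : subspace (orth_compl ip X S).
Proof.
split; first by split=> // w Sw; rewrite (ip0l hX).
move=> a x y [Xx ox] [Xy oy]; split=> // w Sw.
by rewrite (ipDl hX) // (ipZl hX) // ox // oy // mulr0 addr0.
Qed.

Lemma orth_compl_closed : closed_in ip X (orth_compl ip X S).
Proof.
move=> u x ou Xx ux; split=> // w Sw.
have Xu n : X (u n) by case: (ou n).
by apply: (cvg_ip_eq0 hX) ux _ => // n; case: (ou n) => _; apply.
Qed.

End OrthCompl.

Section Projection.
Variables (R : realType) (V : lmodType R[i]) (ip : V -> V -> R[i]) (X M : set V).
Hypotheses (hX : semi_inner_on ip X) (cX : complete_on ip X).
Hypotheses (subM : subspace M) (MX : M `<=` X) (cM : closed_in ip X M).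

Lemma orth_of_nearest x p : X x -> M p ->
  (forall m, M m -> ipnorm ip (x - p) <= ipnorm ip (x - m)) ->
  forall s, M s -> ip (x - p) s = 0.
Proof.
move=> Xx Mp near; have Xp := MX Mp.
have Re0 s : M s -> Re (ip (x - p) s) = 0.
  move=> Ms; have Xs := MX Ms; rewrite (ip_conj hX) // Re_conj.
  have : (- Re (ip s (x - p))) ^+ 2 <= sqnorm ip s * 0.
    apply: sqr_le_of_quadratic_ge0; rewrite ?(sqnorm_ge0 hX) // => t.
    have Mts : M (t%:C%C *: s + p) by [].
    have := near _ Mts; rewrite /ipnorm ler_sqrt ?(sqnorm_ge0 hX) //.
    have -> : x - (t%:C%C *: s + p) = (- t)%:C%C *: s + (x - p).
      by rewrite rmorphN scaleNr opprD addrCA.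
    rewrite -!/(sqnorm ip _) (sqnorm_realZD hX) // sqrrN; nra.
  by rewrite mulr0 sqrrN => h; apply/eqP; rewrite -sqrf_eq0 eq_le h sqr_ge0.
by move=> s Ms; apply: (ip_eq0_Re hX) => //; apply: Re0.
Qed.

Lemma nearest_cauchy x d (ms : nat -> V) : X x -> 0 <= d ->
  (forall m, M m -> d <= ipnorm ip (x - m)) -> (forall n, M (ms n)) ->
  (forall n, ipnorm ip (x - ms n) < d + n.+1%:R^-1) -> cauchy_seq ip ms.
Proof.
move=> Xx d0 d_le Mms ms_lt e e0.
have Xms n : X (ms n) := MX (Mms n).
have c0 : 0 < 4 * (2 * d + 1) by lra.
have [N] := ltr_add_invr (divr_gt0 (exprn_gt0 2 e0) c0).
rewrite add0r ltr_pdivlMr // => epsN.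
have eN1 : N.+1%:R^-1 <= 1 :> R by rewrite invf_le1 ?ltr0Sn // ler1n.
have eN0 : 0 < N.+1%:R^-1 :> R by rewrite invr_gt0 ltr0Sn.
have sq_lt j : (N <= j)%N -> sqnorm ip (x - ms j) < (d + N.+1%:R^-1) ^+ 2.
  move=> Nj; rewrite -(ipnorm_sqr hX) //.
  have lt : ipnorm ip (x - ms j) < d + N.+1%:R^-1.
    by apply: lt_le_trans (ms_lt j) _; rewrite lerD2l invS_le.
  by rewrite ltrXn2r ?ipnorm_ge0.
exists N => n k Nn Nk.
pose mid := (2^-1 : R[i]) *: (ms n + ms k).
have Mmid : M mid by rewrite /mid.
have mid_ge : d ^+ 2 <= sqnorm ip (x - mid).
  rewrite -(ipnorm_sqr hX) //; have := d_le mid Mmid; nra.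
have mid2 : mid + mid = ms k + ms n.
  by rewrite -scalerDl -div1r -splitr scale1r addrC.
(* By the parallelogram law, |ms n - ms k|^2 < 4 (d + eps)^2 - 4 d^2 <= 4 eps (2 d + 1). *)
have para : 4 * sqnorm ip (x - mid) + sqnorm ip (ms n - ms k) =
            2 * sqnorm ip (x - ms k) + 2 * sqnorm ip (x - ms n).
  rewrite -(parallelogram hX) //.
  have -> : x - ms k + (x - ms n) = (x - mid) + (x - mid).
    by rewrite addrACA [RHS]addrACA -!opprD mid2.
  have -> : x - ms k - (x - ms n) = ms n - ms k by rewrite opprB addrC addrA subrK.
  rewrite (sqnormD hX (x := x - mid) (y := x - mid)) // {2}/sqnorm; lra.
have : sqnorm ip (ms n - ms k) < e ^+ 2.
  have := sq_lt n Nn; have := sq_lt k Nk.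
  set eps := N.+1%:R^-1 in epsN eN0 eN1 *; nra.
rewrite -(ipnorm_sqr hX) //; have := ipnorm_ge0 ip (ms n - ms k); nra.
Qed.

Lemma nearest_exists x : X x ->
  exists2 p, M p & forall m, M m -> ipnorm ip (x - p) <= ipnorm ip (x - m).
Proof.
move=> Xx; pose E := [set ipnorm ip (x - m) | m in M].
have E_lb : lbound E 0 by move=> _ [m _ <-]; exact: ipnorm_ge0.
have E_inf : has_inf E by split; [exists (ipnorm ip (x - 0)), 0 | exists 0].
have d_le m : M m -> inf E <= ipnorm ip (x - m).
  by move=> Mm; apply: (@ge_inf _ E); [exists 0 | exists m].
have d0 : 0 <= inf E by apply: lb_le_inf => //; case: E_inf.
have adh n : exists m, M m /\ ipnorm ip (x - m) < inf E + n.+1%:R^-1.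
  have eps0 : 0 < n.+1%:R^-1 :> R by rewrite invr_gt0 ltr0Sn.
  have [_ [m Mm <-] lt] := inf_adherent eps0 E_inf.
  by exists m.
have [ms ms_near] := boolp.choice adh.
have Mms n : M (ms n) by case: (ms_near n).
have [p Xp ms_p] := cX (fun n => MX (Mms n))
  (nearest_cauchy Xx d0 d_le Mms (fun n => proj2 (ms_near n))).
exists p => [|m Mm]; first exact: cM Mms Xp ms_p.
apply: le_trans (d_le m Mm); apply/ler_addgt0Pr => e e0.
have e20 : 0 < e / 2 by rewrite divr_gt0.
have [N ms_pN] := ms_p (e / 2) e20.
have [K] := ltr_add_invr e20; rewrite add0r => epsK.
have [_ ms_xNK] := ms_near (N + K)%N.
have := invS_le R (leq_addl N K); have := ms_pN (N + K)%N (leq_addr K N).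
have : ipnorm ip (x - p) <= ipnorm ip (x - ms (N + K)%N) + ipnorm ip (ms (N + K)%N - p).
  have := ipnormD_le hX (x := x - ms (N + K)%N) (y := ms (N + K)%N - p).
  by rewrite addrA subrK; apply.
set eK := K.+1%:R^-1 in epsK *; set eNK := (N + K).+1%:R^-1 in ms_xNK *; lra.
Qed.

Lemma orth_proj_exists x : X x -> exists p, is_orth_proj ip M x p.
Proof.
move=> Xx; have [p Mp near] := nearest_exists Xx.
by exists p; split=> //; apply: orth_of_nearest.
Qed.

Lemma orth_orth_compl_sub (dX : definite_on ip X) q : X q ->
  (forall s, orth_compl ip X M s -> ip q s = 0) -> M q.
Proof.
move=> Xq orth_q; have [p [Mp orth_p]] := orth_proj_exists Xq.
have qp0 : ip q (q - p) = 0 by apply: orth_q; split.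
have pp0 : ip p (q - p) = 0 by apply: (ip_eq0_sym hX) => //; apply: orth_p.
suff /eqP : q - p = 0 by rewrite subr_eq0 => /eqP ->.
by apply: dX => //; rewrite (ipBl hX) // qp0 pp0 subrr.
Qed.

Lemma orth_proj_ip v p s : X v -> is_orth_proj ip M v p -> M s -> ip s p = ip s v.
Proof.
move=> Xv [Mp orth] Ms; apply/eqP; rewrite eq_sym -subr_eq0 -(ipBr hX) //.
by apply/eqP/(ip_eq0_sym hX) => //; apply: orth.
Qed.

End Projection.

(** * Product and graph spaces *)

Section SqnormConvergence.
Variables (R : realType) (V : lmodType R[i]) (ip : V -> V -> R[i]).

Lemma ipnorm_lt x e : 0 < e -> (ipnorm ip x < e) = (sqnorm ip x < e ^+ 2).
Proof.
move=> e0; rewrite -[e in LHS]gtr0_norm // -sqrtr_sqr.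
have [x0|x_neg] := lerP 0 (sqnorm ip x); first by rewrite ltr_sqrt ?exprn_gt0.
rewrite /ipnorm ltr0_sqrtr // sqrtr_gt0 exprn_gt0 //.
by rewrite (lt_le_trans x_neg) ?sqr_ge0.
Qed.

Lemma cvg_to_sqnorm u x : cvg_to ip u x <->
  forall e, 0 < e -> exists N, forall n, (N <= n)%N -> sqnorm ip (u n - x) < e.
Proof.
split=> ux e e0.
  have se0 : 0 < Num.sqrt e by rewrite sqrtr_gt0.
  have [N uN] := ux _ se0.
  by exists N => n Nn; rewrite -[e]sqr_sqrtr ?ltW // -ipnorm_lt ?sqrtr_gt0 ?uN.
have [N uN] := ux _ (exprn_gt0 2 e0).
by exists N => n Nn; rewrite ipnorm_lt ?uN.
Qed.

Lemma cauchy_seq_sqnorm u : cauchy_seq ip u <->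
  forall e, 0 < e -> exists N, forall n m, (N <= n)%N -> (N <= m)%N -> sqnorm ip (u n - u m) < e.
Proof.
split=> cu e e0.
  have se0 : 0 < Num.sqrt e by rewrite sqrtr_gt0.
  have [N uN] := cu _ se0.
  by exists N => n m Nn Nm; rewrite -[e]sqr_sqrtr ?ltW // -ipnorm_lt ?sqrtr_gt0 ?uN.
have [N uN] := cu _ (exprn_gt0 2 e0).
by exists N => n m Nn Nm; rewrite ipnorm_lt ?uN.
Qed.

End SqnormConvergence.

Definition prod_ip (R : realType) (V W : lmodType R[i]) (ipV : V -> V -> R[i])
    (ipW : W -> W -> R[i]) (p q : V * W) : R[i] :=
  ipV p.1 q.1 + ipW p.2 q.2.

Section ProductSpace.
Variables (R : realType) (V W : lmodType R[i]) (ipV : V -> V -> R[i]) (ipW : W -> W -> R[i]).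
Hypotheses (hV : semi_inner_on ipV setT) (hW : semi_inner_on ipW setT).
Local Notation ipP := (prod_ip ipV ipW).

Lemma sqnorm_prod p : sqnorm ipP p = sqnorm ipV p.1 + sqnorm ipW p.2.
Proof. exact: Re_add. Qed.

Lemma prod_semi_inner : semi_inner_on ipP setT.
Proof.
split=> //.
- by move=> a x y z _ _ _; rewrite /prod_ip /= (ipDl hV) // (ipZl hV) // (ipDl hW) // (ipZl hW) //; ring.
- by move=> x y _ _; rewrite /prod_ip (ip_conj hV) // (ip_conj hW) // rmorphD.
- by move=> x _; rewrite -/(sqnorm _ x) sqnorm_prod addr_ge0 ?(sqnorm_ge0 hV) ?(sqnorm_ge0 hW).
Qed.

Lemma cvg_prodP u x : cvg_to ipP u x <->
  cvg_to ipV (fun n => (u n).1) x.1 /\ cvg_to ipW (fun n => (u n).2) x.2.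
Proof.
rewrite !cvg_to_sqnorm; split=> [ux|[u1 u2] e e0].
  split=> e e0; have [N uN] := ux e e0; exists N => n Nn; have := uN n Nn;
  rewrite sqnorm_prod; have := sqnorm_ge0 hV (x := (u n - x).1) I;
  have := sqnorm_ge0 hW (x := (u n - x).2) I; rewrite /=; lra.
have e20 : 0 < e / 2 by rewrite divr_gt0.
have [N1 uN1] := u1 _ e20; have [N2 uN2] := u2 _ e20.
exists (N1 + N2)%N => n Nn; rewrite sqnorm_prod.
have := uN1 n (leq_trans (leq_addr N2 N1) Nn); have := uN2 n (leq_trans (leq_addl N1 N2) Nn).
rewrite /=; lra.
Qed.

Lemma prod_complete : complete_on ipV setT -> complete_on ipW setT -> complete_on ipP setT.
Proof.
move=> cV cW u _ /cauchy_seq_sqnorm cu.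
have c1 : cauchy_seq ipV (fun n => (u n).1).
  apply/cauchy_seq_sqnorm => e e0; have [N uN] := cu e e0; exists N => n m Nn Nm.
  have := uN n m Nn Nm; rewrite sqnorm_prod /=.
  have := sqnorm_ge0 hW (x := (u n).2 - (u m).2) I; lra.
have c2 : cauchy_seq ipW (fun n => (u n).2).
  apply/cauchy_seq_sqnorm => e e0; have [N uN] := cu e e0; exists N => n m Nn Nm.
  have := uN n m Nn Nm; rewrite sqnorm_prod /=.
  have := sqnorm_ge0 hV (x := (u n).1 - (u m).1) I; lra.
have [x _ ux] := cV _ (fun _ => I) c1; have [y _ uy] := cW _ (fun _ => I) c2.
by exists (x, y) => //; apply/cvg_prodP.
Qed.

End ProductSpace.

Section LinearOp.
Variables (R : realType) (V W : lmodType R[i]) (dom : set V) (A : V -> W).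
Hypothesis linA : linear_op dom A.

Lemma linear_opL a x y : dom x -> dom y -> A (a *: x + y) = a *: A x + A y.
Proof. by case: linA => _ domL Dx Dy; case: (domL a x y Dx Dy). Qed.
Lemma linear_op0 : A 0 = 0.
Proof.
have := linear_opL 1 (subspace0 (linear_op_subspace linA)) (subspace0 (linear_op_subspace linA)).
by rewrite !scale1r addr0 => h; apply: (addrI (A 0)); rewrite addr0 -h.
Qed.
Lemma linear_opZ a x : dom x -> A (a *: x) = a *: A x.
Proof. by move=> Dx; rewrite -[_ *: x]addr0 linear_opL // linear_op0 addr0. Qed.
Lemma linear_opD x y : dom x -> dom y -> A (x + y) = A x + A y.
Proof. by move=> Dx Dy; rewrite -{1}[x]scale1r linear_opL // scale1r. Qed.
Lemma linear_opB x y : dom x -> dom y -> A (x - y) = A x - A y.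
Proof. by move=> Dx Dy; rewrite linear_opD // -scaleN1r linear_opZ // scaleN1r. Qed.

End LinearOp.

Section GraphSpace.
Variables (R : realType) (V W : lmodType R[i]) (ipV : V -> V -> R[i]) (ipW : W -> W -> R[i]).
Hypotheses (hV : semi_inner_on ipV setT) (hW : semi_inner_on ipW setT).
Variables (dom : set V) (A : V -> W).
Hypothesis linA : linear_op dom A.
Local Notation ipA := (graph_ip ipV ipW A).
Local Notation ipP := (prod_ip ipV ipW).

Lemma graph_semi_inner : semi_inner_on ipA dom.
Proof.
split=> [||x y _ _|x _]; first exact: linear_op_subspace linA.
- move=> a x y z Dx Dy Dz; rewrite /graph_ip (linear_opL linA) //.
  by rewrite (ipDl hV) // (ipZl hV) // (ipDl hW) // (ipZl hW) //; ring.
- by rewrite /graph_ip (ip_conj hV) // (ip_conj hW) // rmorphD.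
- exact: (sqnorm_ge0 (prod_semi_inner hV hW) (x := (x, A x))).
Qed.

Lemma graph_definite : definite_on ipV setT -> definite_on ipA dom.
Proof.
move=> dV x _; rewrite -/(sqnorm _ x) => /= sq0; apply: dV => //.
have := sqnorm_ge0 hV (x := x) I; have := sqnorm_ge0 hW (x := A x) I.
by move: sq0; rewrite /sqnorm /graph_ip Re_add; lra.
Qed.

Lemma sqnorm_graph x y : dom x -> dom y ->
  sqnorm ipA (x - y) = sqnorm ipP ((x, A x) - (y, A y)).
Proof. by move=> Dx Dy; rewrite /sqnorm /graph_ip /prod_ip /= (linear_opB linA). Qed.

Lemma cvg_graphP u x : (forall n, dom (u n)) -> dom x ->
  cvg_to ipA u x <-> cvg_to ipP (fun n => (u n, A (u n))) (x, A x).
Proof.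
move=> Du Dx; rewrite !cvg_to_sqnorm.
split=> ux e e0; have [N uN] := ux e e0; exists N => n Nn.
  by rewrite -sqnorm_graph // uN.
by rewrite sqnorm_graph // uN.
Qed.

Hypothesis clA : closed_op ipV ipW dom A.

Lemma graph_complete : complete_on ipV setT -> complete_on ipW setT -> complete_on ipA dom.
Proof.
move=> cV cW u Du /cauchy_seq_sqnorm cu.
have cuP : cauchy_seq ipP (fun n => (u n, A (u n))).
  apply/cauchy_seq_sqnorm => e e0; have [N uN] := cu e e0.
  by exists N => n m Nn Nm; rewrite -sqnorm_graph // uN.
have [[x y] _ /(cvg_prodP hV hW) [ux uy]] := prod_complete hV hW cV cW (fun _ => I) cuP.
have [Dx Axy] := clA Du ux uy.
exists x => //; apply/(cvg_graphP Du Dx); rewrite Axy.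
by apply/(cvg_prodP hV hW).
Qed.

Lemma closed_op_biadjoint (dV : definite_on ipV setT) (dW : definite_on ipW setT)
    (cV : complete_on ipV setT) (cW : complete_on ipW setT) x y :
  (forall w z, adjoint_graph ipV ipW dom A (w, z) -> ipW y w = ipV x z) ->
  dom x /\ A x = y.
Proof.
(* If (u, A u) is the projection of (x, y) onto the graph of A, then (y - A u, u - x)
   lies in the graph of A^*, and the hypothesis makes the residual orthogonal to itself. *)
move=> orth_adj; have hP := prod_semi_inner hV hW.
pose Gr := [set p : V * W | dom p.1 /\ A p.1 = p.2].
have subGr : subspace Gr.
  split; first by split=> //=; rewrite (linear_op0 linA).
  move=> a [x1 x2] [y1 y2] [/= Dx1 <-] [/= Dy1 <-].
  by split=> //=; rewrite (linear_opL linA).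
have clGr : closed_in ipP setT Gr.
  move=> u [x1 x2] Gu _ /(cvg_prodP hV hW) [u1 u2] /=.
  have Du n : dom (u n).1 by case: (Gu n).
  apply: (clA Du u1).
  by have -> : (fun n => A (u n).1) = (fun n => (u n).2) by apply/boolp.funext => n; case: (Gu n).
have [[u v] [[/= Du <-] orth]] :=
  orth_proj_exists hP (prod_complete hV hW cV cW) subGr (fun _ _ => I) clGr (x := (x, y)) I.
have adj : adjoint_graph ipV ipW dom A (y - A u, u - x).
  move=> w Dw /=; have := orth (w, A w) (conj Dw erefl); rewrite /prod_ip /= => h.
  rewrite -[u - x]opprB (ipNr hV) // (ip_conj hW (x := y - A u)) // (ip_conj hV (x := x - u)) //.
  by apply/eqP; rewrite -addr_eq0 -rmorphD addrC h rmorph0.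
have e1 := orth_adj _ _ adj; have e2 := adj u Du.
have sq0 : sqnorm ipW (y - A u) + sqnorm ipV (x - u) = 0.
  rewrite /sqnorm (ipBl hW) // e1 e2 -(ipBl hV) // -[u - x]opprB (ipNr hV) // Re_opp.
  exact: addNr.
have := sqnorm_ge0 hV (x := x - u) I; have := sqnorm_ge0 hW (x := y - A u) I => y0 x0.
have /eqP : x - u = 0 by apply: dV => //; rewrite -/(sqnorm _ _); lra.
have /eqP : y - A u = 0 by apply: dW => //; rewrite -/(sqnorm _ _); lra.
by rewrite !subr_eq0 => /eqP -> /eqP ->.
Qed.

End GraphSpace.

Section AdjointPair.
Variables (R : realType) (V W : lmodType R[i]) (ipV : V -> V -> R[i]) (ipW : W -> W -> R[i]).
Hypotheses (hV : semi_inner_on ipV setT) (hW : semi_inner_on ipW setT).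
Variables (dom : set V) (A : V -> W) (domB : set W) (B : W -> V).
Hypotheses (linA : linear_op dom A) (linB : linear_op domB B).
Hypothesis adjA_sub_B : forall y z, adjoint_graph ipV ipW dom A (y, z) -> domB y /\ B y = - z.

Lemma adjoint_dom_subspace : subspace (adjoint_dom ipV ipW dom A).
Proof.
split; first by exists 0 => x Dx; rewrite (ip0r hW) ?(ip0r hV).
move=> a y1 y2 [z1 adj1] [z2 adj2]; exists (a *: z1 + z2) => x Dx /=.
by rewrite (ipDr hW) // (ipZr hW) // (ipDr hV) // (ipZr hV) // adj1 // adj2.
Qed.

Lemma adjoint_dom_closed : closed_in (graph_ip ipW ipV B) domB (adjoint_dom ipV ipW dom A).
Proof.
move=> u w adj_u Dw uw; exists (- B w) => x Dx /=.
have DBu n : domB (u n) by have [z /adjA_sub_B []] := adj_u n.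
have hP := prod_semi_inner hW hV.
have orth n : prod_ip ipW ipV (u n, B (u n)) (A x, x) = 0.
  have [z adj] := adj_u n; have [_ ->] := adjA_sub_B adj.
  by rewrite /prod_ip /= (ipNl hV) // (ip_conj hW (x := A x)) // adj // -(ip_conj hV) // subrr.
have := cvg_ip_eq0 hP (fun _ => I) I I ((cvg_graphP ipW ipV linB DBu Dw).1 uw) orth.
rewrite /prod_ip /= => /eqP; rewrite addr_eq0 => /eqP.
by rewrite (ipNr hV) // (ip_conj hW (x := w)) // (ip_conj hV (x := B w)) // => ->; rewrite rmorphN.
Qed.

Lemma adjoint_sub_of_adjoint_sub (clA : closed_op ipV ipW dom A) (dV : definite_on ipV setT) (dW : definite_on ipW setT)
    (cV : complete_on ipV setT) (cW : complete_on ipW setT) w z :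
  adjoint_graph ipW ipV domB B (w, z) -> dom w /\ A w = - z.
Proof.
move=> adj; apply: (closed_op_biadjoint hV hW linA clA) => // y' z' adj'.
have [DBy' By'] := adjA_sub_B adj'; have := adj y' DBy'; rewrite By' /= (ipNl hV) // => h.
by rewrite (ipNl hW) // (ip_conj hW (x := y')) // (ip_conj hV (x := z')) // -h rmorphN opprK.
Qed.

End AdjointPair.

Section HilbertSpace.
Variables (R : realType) (V : lmodType R[i]) (ip : V -> V -> R[i]).
Hypothesis hH : is_hilbert ip.

Lemma hilbert_semi_inner : semi_inner_on ip setT.
Proof.
case: hH => [[ipL ipC ip_pos] _]; split=> // x _.
have [->|/ip_pos/ltW //] := eqVneq x 0.
have := ipL 1 0 0 0; rewrite scale1r addr0 mul1r => h.
by have -> : ip 0 0 = 0 by apply: (addrI (ip 0 0)); rewrite addr0 -h.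
Qed.

Lemma hilbert_definite : definite_on ip setT.
Proof.
case: hH => [[_ _ ip_pos] _] x _ Re0; apply/eqP/negPn/negP => /ip_pos.
by rewrite Re0 ltxx.
Qed.

Lemma hilbert_complete : complete_on ip setT.
Proof. by case: hH => _ cmpl u _ /cmpl [x ux]; exists x. Qed.

End HilbertSpace.

(** * The Dirichlet-to-Neumann graph *)

Section DirichletToNeumann.
Variables (R : realType) (H0 H1 : lmodType R[i]) (ip0 : H0 -> H0 -> R[i]) (ip1 : H1 -> H1 -> R[i]).
Hypotheses (hH0 : is_hilbert ip0) (hH1 : is_hilbert ip1).
Variables (domG : set H0) (G : H0 -> H1) (domD : set H1) (D : H1 -> H0).
Hypotheses (linG : linear_op domG G) (closedG : closed_op ip0 ip1 domG G)
  (linD : linear_op domD D) (closedD : closed_op ip1 ip0 domD D).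
Hypothesis GstarD : forall y z, adjoint_graph ip0 ip1 domG G (y, z) -> domD y /\ D y = - z.

Local Notation ipG := (graph_ip ip0 ip1 G).
Local Notation ipD := (graph_ip ip1 ip0 D).
Local Notation BDG := (BDG ip0 ip1 domG G domD D).
Local Notation BDD := (BDD ip0 ip1 domG G domD D).

Let h0 := hilbert_semi_inner hH0.
Let h1 := hilbert_semi_inner hH1.
Let d0 := hilbert_definite hH0.
Let d1 := hilbert_definite hH1.
Let c0 := hilbert_complete hH0.
Let c1 := hilbert_complete hH1.
Let hG := graph_semi_inner h0 h1 linG.
Let hD := graph_semi_inner h1 h0 linD.
Let dG : definite_on ipG domG := graph_definite h0 h1 d0.
Let dD : definite_on ipD domD := graph_definite h1 h0 d1.
Let cG := graph_complete h0 h1 linG closedG c0 c1.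
Let cD := graph_complete h1 h0 linD closedD c1 c0.

Lemma adjointD_subG w z : adjoint_graph ip1 ip0 domD D (w, z) -> domG w /\ G w = - z.
Proof. exact: (adjoint_sub_of_adjoint_sub h0 h1 linG GstarD closedG d0 d1 c0 c1 (w := w)). Qed.

Lemma BDD_D q : BDD q -> [/\ domG (D q), G (D q) = q & BDG (D q)].
Proof.
case=> Dq orth_q.
have [DDq GDq] : domG (D q) /\ G (D q) = q.
  apply: (closed_op_biadjoint h0 h1 linG closedG d0 d1 c0 c1) => w z adj.
  have [Dw Dwz] := GstarD adj; have := orth_q w (ex_intro _ z adj).
  by rewrite /graph_ip Dwz (ipNr h0) // => /eqP; rewrite subr_eq0 => /eqP.
split=> //; split=> // w [z adj]; have [Gw Gwz] := adjointD_subG adj.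
by rewrite /graph_ip GDq Gwz (ipNr h1) // (adj q Dq) subrr.
Qed.

(* [BDG] unfolds to [orth_compl ipG domG (adjoint_dom ip1 ip0 domD D)], and [BDD]
   likewise. *)
Lemma BDG_orth_proj v : domG v -> exists p, is_orth_proj ipG BDG v p.
Proof.
have sub : adjoint_dom ip1 ip0 domD D `<=` domG by move=> w [z /adjointD_subG []].
move=> Dv; apply: (orth_proj_exists hG cG (orth_compl_subspace hG sub) _
  (orth_compl_closed hG sub) Dv); by move=> w [].
Qed.

Lemma orth_BDD_adjoint q : domD q -> (forall s, BDD s -> ipD q s = 0) ->
  adjoint_dom ip0 ip1 domG G q.
Proof.
have sub : adjoint_dom ip0 ip1 domG G `<=` domD by move=> y [z /GstarD []].
move=> Dq; apply: (orth_orth_compl_sub hD cD (adjoint_dom_subspace h0 h1 domG G) sub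
  (adjoint_dom_closed h0 h1 linD GstarD) dD Dq).
Qed.

Variables (m mst : H0 -> H0) (a ast : H1 -> H1).
Hypotheses (bm : bounded_op ip0 m) (hmst : forall x y, ip0 (m x) y = ip0 x (mst y))
  (ba : bounded_op ip1 a) (hast : forall x y, ip1 (a x) y = ip1 x (ast y)).
Variable T : H0 -> H0.
Hypotheses (T_dom : forall u, domG u -> domG (T u))
  (T_def : forall u v, domG u -> domG v -> ipG (T u) v = ip1 (a (G u)) (G v) + ip0 (m u) v)
  (T_closed_range : forall (u : nat -> H0) (w : H0), (forall n, domG (u n)) -> domG w ->
     cvg_to ipG (fun n => T (u n)) w -> exists u0, domG u0 /\ T u0 = w).

Lemma T_linear al u u' : domG u -> domG u' -> T (al *: u + u') = al *: T u + T u'.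
Proof.
move=> Du Du'; have [lin_m _] := bm; have [lin_a _] := ba.
apply: (ip_eq_on hG dG) => // v Dv.
rewrite (ipDl hG) // (ipZl hG) // !T_def // (linear_opL linG) // lin_a lin_m.
by rewrite (ipDl h1) // (ipZl h1) // (ipDl h0) // (ipZl h0) //; ring.
Qed.

Lemma ranT_subspace : subspace (T @` domG).
Proof.
have D0 : domG 0 by [].
split.
  exists 0 => //; have := T_linear 1 D0 D0; rewrite !scale1r addr0 => T00.
  by apply: (addrI (T 0)); rewrite addr0 -T00.
by move=> al _ _ [u Du <-] [u' Du' <-]; exists (al *: u + u') => //; apply: T_linear.
Qed.

Lemma ranT_closed : closed_in ipG domG (T @` domG).
Proof.
move=> w y Tw Dy wy.
have pre n : exists u, domG u /\ T u = w n by have [u Du Tu] := Tw n; exists u.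
have [us usP] := boolp.choice pre.
have Tus : (fun n => T (us n)) = w by apply/boolp.funext => n; case: (usP n).
rewrite -Tus in wy; have [u [Du Tu]] := T_closed_range (fun n => proj1 (usP n)) Dy wy.
by exists u.
Qed.

Lemma ranT_orth_decomp y : domG y ->
  exists2 u, domG u & forall u', domG u' -> ipG (y - T u) (T u') = 0.
Proof.
move=> Dy; have ranT_sub : T @` domG `<=` domG by move=> _ [u Du <-]; apply: T_dom.
have [_ [[u Du <-] orth]] := orth_proj_exists hG cG ranT_subspace ranT_sub ranT_closed Dy.
by exists u => // u' Du'; apply: orth; exists u'.
Qed.

Lemma ker_mstarP v : domG v ->
  ker_mstar ip0 ip1 domG G ast mst v <-> forall u, domG u -> ipG (T u) v = 0.
Proof.
move=> Dv; split=> [[_ [z [adj mz]]] u Du | orth].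
  by rewrite T_def // hast hmst mz (adj u Du) (ipNr h0) // subrr.
split=> //; exists (- mst v); split=> [x Dx /=|]; last by rewrite opprK.
have := orth x Dx; rewrite T_def // hast hmst => /eqP; rewrite addr_eq0 => /eqP ->.
by rewrite (ipNr h0).
Qed.

Lemma T_eq_DP u q : domG u -> BDD q ->
  T u = D q <-> adjoint_graph ip0 ip1 domG G (a (G u) - q, D q - m u).
Proof.
move=> Du Bq; have [DDq GDq _] := BDD_D Bq; have Dq : domD q by case: Bq.
have sub_eq (A B C E : R[i]) : A + B = C + E <-> A - E = C - B.
  by split=> /eqP; rewrite -subr_eq0 => /eqP h; apply/eqP; rewrite -subr_eq0 -h; apply/eqP; ring.
have key x : domG x ->
    ipG (T u) x = ipG (D q) x <-> ip1 (G x) (a (G u) - q) = ip0 x (D q - m u).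
  move=> Dx; rewrite T_def // /graph_ip GDq (ip_conj h1 (x := a (G u) - q)) //.
  rewrite (ip_conj h0 (x := D q - m u)) // (ipBl h1) // (ipBl h0) //.
  split=> [/sub_eq h | /(can_inj (@conjcK R)) h]; last exact/sub_eq.
  exact: (congr1 (@conjc R) h).
split=> [TuDq x Dx | adj]; first by apply/key => //; rewrite TuDq.
by apply: (ip_eq_on hG dG) => // x Dx; apply/key/adj.
Qed.

Local Notation Lambda := (DtN_graph ip0 ip1 domG G domD D a m).

Lemma DtN_graph_T p q : Lambda (p, q) -> BDD q /\ exists2 u, domG u & T u = D q.
Proof.
case=> u [Du DaGu mu _ [Bq orth_q]]; split=> //; exists u => //.
have Dq : domD q by case: Bq.
have [z adj] : adjoint_dom ip0 ip1 domG G (a (G u) - q) by apply: orth_BDD_adjoint.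
have [_ Dz] := GstarD adj.
have DaG : D (a (G u)) = m u by move/eqP: mu; rewrite subr_eq0 => /eqP.
apply/T_eq_DP => //; suff -> : D q - m u = z by [].
by rewrite -[z]opprK -Dz (linear_opB linD) // DaG opprB.
Qed.

Lemma T_DtN_graph u q : domG u -> BDD q -> T u = D q -> exists p, Lambda (p, q).
Proof.
move=> Du Bq /(T_eq_DP Du Bq) adj; have [Dq orth_q] := Bq.
have [Dr Dr_eq] := GstarD adj.
have DaGu : domD (a (G u)) by rewrite -(subrK q (a (G u))).
have DaG : D (a (G u)) = m u.
  move: Dr_eq; rewrite (linear_opB linD) // opprB => /(congr1 (+%R^~ (D q))).
  by rewrite !subrK.
have [p Pp] := BDG_orth_proj Du.
exists p, u; split=> //; first by rewrite DaG subrr.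
split=> // s [Ds orth_s]; apply: (ip_eq0_sym hD) => //.
by apply: orth_s; exists (D q - m u).
Qed.

Lemma dom_inv_DtN_graph :
  dom_inv Lambda = [set q | BDD q /\ forall v p, ker_mstar ip0 ip1 domG G ast mst v ->
                                      is_orth_proj ipG BDG v p -> ipG (D q) p = 0].
Proof.
have BDG_domG : BDG `<=` domG by move=> w [].
apply/seteqP; split=> q /=.
  move=> [_ /DtN_graph_T [Bq [u Du TuDq]]]; split=> // v p kv Pp.
  have [_ _ BDq] := BDD_D Bq; have Dv : domG v by case: kv.
  by rewrite (orth_proj_ip hG BDG_domG Dv Pp BDq) -TuDq; apply: (ker_mstarP Dv).1.
move=> [Bq orth_q]; have [DDq _ BDq] := BDD_D Bq.
have [u Du orth_ran] := ranT_orth_decomp DDq.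
have Dz : domG (D q - T u) by [].
have orth_z u' : domG u' -> ipG (T u') (D q - T u) = 0.
  by move=> Du'; apply: (ip_eq0_sym hG) => //; apply: orth_ran.
have kz := (ker_mstarP Dz).2 orth_z.
have [p Pp] := BDG_orth_proj Dz.
have z0 : D q - T u = 0.
  apply: dG => //; rewrite (ipBl hG) // -(orth_proj_ip hG BDG_domG _ Pp BDq) //.
  by rewrite (orth_q _ _ kz Pp) orth_z // subrr.
by apply: (T_DtN_graph Du Bq); apply/eqP; rewrite eq_sym -subr_eq0 z0.
Qed.

End DirichletToNeumann.

Theorem proposition5p7 (R : realType) (H0 H1 : lmodType R[i])
    (ip0 : H0 -> H0 -> R[i]) (ip1 : H1 -> H1 -> R[i])
    (hH0 : is_hilbert ip0) (hH1 : is_hilbert ip1)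
    (domG : set H0) (G : H0 -> H1) (domD : set H1) (D : H1 -> H0)
    (linG : linear_op domG G) (denseG : densely_defined ip0 domG)
    (closedG : closed_op ip0 ip1 domG G)
    (linD : linear_op domD D) (denseD : densely_defined ip1 domD)
    (closedD : closed_op ip1 ip0 domD D)
    (GstarD : forall (y : H1) (z : H0), adjoint_graph ip0 ip1 domG G (y, z) ->
                domD y /\ D y = - z)
    (m : H0 -> H0) (mst : H0 -> H0) (a : H1 -> H1) (ast : H1 -> H1)
    (bm : bounded_op ip0 m) (hmst : forall x y : H0, ip0 (m x) y = ip0 x (mst y))
    (ba : bounded_op ip1 a) (hast : forall x y : H1, ip1 (a x) y = ip1 x (ast y))
    (coer_a : coercive ip1 a)
    (T : H0 -> H0) (T_dom : forall u, domG u -> domG (T u))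
    (T_def : forall u v, domG u -> domG v ->
       graph_ip ip0 ip1 G (T u) v = ip1 (a (G u)) (G v) + ip0 (m u) v)
    (T_closed_range : forall (u : nat -> H0) (w : H0),
       (forall n, domG (u n)) -> domG w ->
       cvg_to (graph_ip ip0 ip1 G) (fun n => T (u n)) w ->
       exists u0 : H0, domG u0 /\ T u0 = w) :
  dom_inv (DtN_graph ip0 ip1 domG G domD D a m) =
  [set q0 | BDD ip0 ip1 domG G domD D q0 /\
     forall v p : H0, ker_mstar ip0 ip1 domG G ast mst v ->
       is_orth_proj (graph_ip ip0 ip1 G) (BDG ip0 ip1 domG G domD D) v p ->
       graph_ip ip0 ip1 G (D q0) p = 0].
Proof.
exact: (dom_inv_DtN_graph hH0 hH1 linG closedG linD closedD GstarD
  bm hmst ba hast T_dom T_def T_closed_range).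
Qed.
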